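(* Let $\mathbf{L}=\langle L,\leq,0,1\rangle$ be a totally ordered complete lattice and let $f\colon L\to L$ be order preserving. Then for any ranked data tables $\mathcal{D}_1,\mathcal{D}_2,\mathcal{D}$ and restriction condition $\theta$ for which both sides of the following equalities are defined: (1) $(\mathcal{D}_1\bowtie\mathcal{D}_2)\circ f=(\mathcal{D}_1\circ f)\bowtie(\mathcal{D}_2\circ f)$; (2) $\sigma_{\theta}(\mathcal{D})\circ f=\sigma_{\theta\circ f}(\mathcal{D}\circ f)$; (3) $(\mathcal{D}_1\cup\mathcal{D}_2)\circ f=(\mathcal{D}_1\circ f)\cup(\mathcal{D}_2\circ f)$; (4) $\pi_S(\mathcal{D})\circ f=\pi_S(\mathcal{D}\circ f)$.
   Context: A relation scheme is a finite set of attributes, each with a (at most countable) set of admissible values; a tuple on $R$ assigns to each attribute of $R$ an admissible value; $\mathrm{Tupl}(R)$ is the set of tuples on $R$. Tuples $r$ on $R$ and $s$ on $S$ are joinable if they agree on $R\cap S$; then $rs$ is the tuple on $R\cup S$ extending both. A ranked data table (RDT) on $R$ is a map $\mathcal{D}\colon\mathrm{Tupl}(R)\to L$ with $\{r;\ \mathcal{D}(r)>0\}$ finite. For a map $g$ with values in $L$ and $f\colon L\to L$, $g\circ f$ denotes $x\mapsto f(g(x))$; the operations below are applied to maps such as $\mathcal{D}\circ f$ by the same formulas. Operations: for $\mathcal{D}_1$ on $R\cup S$ and $\mathcal{D}_2$ on $S\cup T$ with $R,S,T$ pairwise disjoint, the join is $(\mathcal{D}_1\bowtie\mathcal{D}_2)(rst)=\inf\{\mathcal{D}_1(rs),\mathcal{D}_2(st)\}$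 for $r\in\mathrm{Tupl}(R),s\in\mathrm{Tupl}(S),t\in\mathrm{Tupl}(T)$. A restriction condition on $R$ is any map $\theta\colon\mathrm{Tupl}(R)\to L$, and $(\sigma_\theta(\mathcal{D}))(r)=\inf\{\mathcal{D}(r),\theta(r)\}$. For $\mathcal{D}_1,\mathcal{D}_2$ on the same $R$, $(\mathcal{D}_1\cup\mathcal{D}_2)(r)=\sup\{\mathcal{D}_1(r),\mathcal{D}_2(r)\}$. For $\mathcal{D}$ on $R$ and $S\subseteq R$, $(\pi_S(\mathcal{D}))(s)=\sup\{\mathcal{D}(st);\ t\in\mathrm{Tupl}(R\setminus S)\}$ for $s\in\mathrm{Tupl}(S)$. A map $f$ is order preserving if $a\leq b$ implies $f(a)\leq f(b)$. *)

From Stdlib Require Import List.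
From mathcomp Require Import all_boot all_order.
From mathcomp Require Import finmap.
Set Implicit Arguments. Unset Strict Implicit. Unset Printing Implicit Defensive.
Import Order.TTheory.
Local Open Scope order_scope.
Local Open Scope fset_scope.

Section RDT.
Variables (d : Order.disp_t) (L : tbOrderType d).
Variables (A : choiceType) (dom : A -> countType).

Definition Tupl (R : {fset A}) := forall a : {a : A | a \in R}, dom (proj1_sig a).

Definition restr (X Y : {fset A}) (H : X `<=` Y) (u : Tupl Y) : Tupl X :=
  fun a => u (exist _ (proj1_sig a) (fsubsetP H _ (proj2_sig a))).

Definition is_RDT (R : {fset A}) (D : Tupl R -> L) : Prop :=
  exists s : list (Tupl R), forall r, \bot < D r -> In r s.

Definition is_sup_op (sup : (L -> Prop) -> L) : Prop :=
  forall P : L -> Prop,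
    (forall x, P x -> x <= sup P) /\
    (forall y, (forall x, P x -> x <= y) -> sup P <= y).

Lemma subset_RS_RST (R S T : {fset A}) : R `|` S `<=` R `|` S `|` T.
Proof. exact: fsubsetUl. Qed.
Lemma subset_ST_RST (R S T : {fset A}) : S `|` T `<=` R `|` S `|` T.
Proof.
apply/fsubsetP => x; rewrite !inE => /orP [] ->; by rewrite ?orbT.
Qed.

Definition rjoin (R S T : {fset A}) (D1 : Tupl (R `|` S) -> L)
  (D2 : Tupl (S `|` T) -> L) : Tupl (R `|` S `|` T) -> L :=
  fun u => Order.meet (D1 (restr (subset_RS_RST R S T) u)) (D2 (restr (subset_ST_RST R S T) u)).

Definition rselect (R : {fset A}) (theta D : Tupl R -> L) : Tupl R -> L :=
  fun r => Order.meet (D r) (theta r).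

Definition runion (R : {fset A}) (D1 D2 : Tupl R -> L) : Tupl R -> L :=
  fun r => Order.join (D1 r) (D2 r).

(* Projection onto S ⊆ R: pi_S(D)(s) = sup { D(st) ; t on R \ S },
   where the tuples st are exactly the tuples u on R whose restriction to S is s. *)
Definition rproject (sup : (L -> Prop) -> L) (S R : {fset A}) (H : S `<=` R)
  (D : Tupl R -> L) : Tupl S -> L :=
  fun s => sup (fun x => exists u : Tupl R, restr H u = s /\ x = D u).

End RDT.

(* In a chain, binary meets and joins are minima and maxima, which every
   order-preserving map respects.  For the projection, a ranked data table has
   only finitely many tuples of positive rank, so each supremum defining
   [pi_S(D)] is attained at some tuple [u0] (the fibre over [s] is nonempty
   because every attribute domain is inhabited); a monotone [f] sends the
   attained maximum [D u0] to the attained maximum [f (D u0)] of [f \o D]. *)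
From mathcomp Require Import all_boot all_order.
From mathcomp Require Import finmap.
From Stdlib Require Import List Classical FunctionalExtensionality.
Set Implicit Arguments. Unset Strict Implicit. Unset Printing Implicit Defensive.
Import Order.TTheory.
Local Open Scope order_scope.
Local Open Scope fset_scope.

Section MonotoneChain.
Variables (d d' : Order.disp_t) (T : orderType d) (T' : orderType d').
Variables (f : T -> T') (f_homo : {homo f : x y / x <= y}).

Lemma homo_meet (x y : T) : f (x `&` y)%O = (f x `&` f y)%O.
Proof.
case/orP: (le_total x y) => le_xy.
  by rewrite !meet_l ?f_homo.
by rewrite !meet_r ?f_homo.
Qed.

Lemma homo_join (x y : T) : f (x `|` y)%O = (f x `|` f y)%O.
Proof.
case/orP: (le_total x y) => le_xy.
  by rewrite !join_r ?f_homo.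
by rewrite !join_l ?f_homo.
Qed.

End MonotoneChain.

Section FinitelySupportedMax.
Variables (d : Order.disp_t) (T : bOrderType d) (X : Type) (g : X -> T).

Lemma list_argmax (P : X -> Prop) (x1 : X) (l : list X) : P x1 ->
  exists u, P u /\ g x1 <= g u /\ forall x, In x l -> P x -> g x <= g u.
Proof.
move=> Px1; elim: l => [|r l [u [Pu [le1u IH]]]]; first by exists x1.
have [le_ru | lt_ur] := leP (g r) (g u).
  by exists u; do 2!split=> //; move=> x [<- _ | /IH].
case: (classic (P r)) => [Pr | nPr].
  exists r; do 2!split=> //; first exact: le_trans le1u (ltW lt_ur).
  move=> x [<- _ // | /IH x_le /x_le le_xu]; exact: le_trans le_xu (ltW lt_ur).
by exists u; do 2!split=> //; move=> x [<- /nPr | /IH].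
Qed.

Lemma finite_support_argmax (P : X -> Prop) (l : list X) (x1 : X) :
  (forall x, \bot < g x -> In x l) -> P x1 ->
  exists u, P u /\ forall x, P x -> g x <= g u.
Proof.
move=> supp Px1; have [u [Pu [_ max_u]]] := list_argmax l Px1.
exists u; split=> // x Px; have [/supp/max_u->//|] := ltP \bot (g x).
by rewrite le_eqVlt ltNge le0x orbF => /eqP->.
Qed.

End FinitelySupportedMax.

Lemma sup_image_max (d : Order.disp_t) (L : tbOrderType d)
    (sup : (L -> Prop) -> L) (X : Type) (P : X -> Prop) (g : X -> L) (u0 : X) :
  is_sup_op sup -> P u0 -> (forall u, P u -> g u <= g u0) ->
  sup (fun x => exists u, P u /\ x = g u) = g u0.
Proof.
move=> sup_op Pu0 max_u0; apply/le_anti/andP; split.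
  by apply: (proj2 (sup_op _)) => _ [u [Pu ->]]; apply: max_u0.
by apply: (proj1 (sup_op _)); exists u0.
Qed.

Section Restriction.
Variables (A : choiceType) (dom : A -> countType).
Hypothesis dom_inhabited : forall a, inhabited (dom a).

Lemma restr_surjective (S R : {fset A}) (H : S `<=` R) (s : Tupl dom S) :
  exists u : Tupl dom R, restr H u = s.
Proof.
have witness a : exists x : dom a, true by case: (dom_inhabited a) => x; exists x.
exists (fun a : {a | a \in R} =>
  match @idP (sval a \in S) with
  | ReflectT Sa => s (exist _ (sval a) Sa)
  | ReflectF _ => xchoose (witness (sval a))
  end).
apply: functional_extensionality_dep => -[x Sx]; rewrite /restr /=.
destruct (@idP (x \in S)) as [Sx' | nSx]; last by case: nSx.
by rewrite (bool_irrelevance Sx' Sx).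
Qed.

End Restriction.

Theorem theorem6 (d : Order.disp_t) (L : tbOrderType d)
  (sup : (L -> Prop) -> L) (Hsup : is_sup_op sup)
  (f : L -> L) (Hf : {homo f : x y / x <= y})
  (A : choiceType) (dom : A -> countType) (Hdom : forall a, inhabited (dom a)) :
  (* (1) join *)
  (forall (R S T : {fset A}),
     fdisjoint R S -> fdisjoint S T -> fdisjoint R T ->
     forall (D1 : Tupl dom (R `|` S) -> L) (D2 : Tupl dom (S `|` T) -> L),
       is_RDT D1 -> is_RDT D2 ->
       f \o rjoin D1 D2 = rjoin (f \o D1) (f \o D2)) /\
  (* (2) restriction *)
  (forall (R : {fset A}) (D theta : Tupl dom R -> L),
     is_RDT D ->
     f \o rselect theta D = rselect (f \o theta) (f \o D)) /\
  (* (3) union *)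
  (forall (R : {fset A}) (D1 D2 : Tupl dom R -> L),
     is_RDT D1 -> is_RDT D2 ->
     f \o runion D1 D2 = runion (f \o D1) (f \o D2)) /\
  (* (4) projection *)
  (forall (R S : {fset A}) (H : S `<=` R) (D : Tupl dom R -> L),
     is_RDT D ->
     f \o rproject sup H D = rproject sup H (f \o D)).
Proof.
have meetE := homo_meet Hf; have joinE := homo_join Hf.
split; [|split; [|split]].
- move=> R S T _ _ _ D1 D2 _ _; apply: functional_extensionality => u.
  by rewrite /= /rjoin meetE.
- move=> R D theta _; apply: functional_extensionality => r.
  by rewrite /= /rselect meetE.
- move=> R D1 D2 _ _; apply: functional_extensionality => r.
  by rewrite /= /runion joinE.
- move=> R S H D [l supp]; apply: functional_extensionality => s.
  have [u1 fibre_u1] := restr_surjective Hdom H s.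
  have [u0 [fibre_u0 max_u0]] :=
    finite_support_argmax (P := fun u => restr H u = s) supp fibre_u1.
  have f_max_u0 u : restr H u = s -> f (D u) <= f (D u0) by move/max_u0/Hf.
  by rewrite /= /rproject (sup_image_max Hsup fibre_u0 max_u0)
    (sup_image_max Hsup fibre_u0 f_max_u0).
Qed.
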